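(* Let $\mathbf{M},\mathbf{N}\in\mathbb{K}^{I_1\times I_2}$ have ranks $R_{\mathbf{M}}\geq R_{\mathbf{N}}$. Then there is a unitary $\mathbf{U}\in\mathbb{K}^{I_1\times I_1}$ with $\mathrm{ran}\,\mathbf{M}\supseteq\mathrm{ran}\,\mathbf{U}\mathbf{N}$ and $\|\mathbf{M}-\mathbf{U}\mathbf{N}\|_{\mathrm{F}}\leq\|\mathbf{M}-\mathbf{N}\|_{\mathrm{F}}$. Consequently, for any $\mathbf{U}_{\mathbf{M}}\in\mathbb{K}^{I_1\times R_{\mathbf{M}}}$ with orthonormal columns and range $\mathrm{ran}\,\mathbf{M}$, there is $\mathbf{U}_{\mathbf{N}}\in\mathbb{K}^{I_1\times R_{\mathbf{M}}}$ with orthonormal columns such that $\mathrm{ran}\,\mathbf{U}_{\mathbf{N}}\supseteq\mathrm{ran}\,\mathbf{N}$ and $\|\mathbf{U}_{\mathbf{M}}^{\mathrm{H}}\mathbf{M}-\mathbf{U}_{\mathbf{N}}^{\mathrm{H}}\mathbf{N}\|_{\mathrm{F}}\leq\|\mathbf{M}-\mathbf{N}\|_{\mathrm{F}}$.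
   Context: $\mathbb{K}$ denotes $\mathbb{R}$ or $\mathbb{C}$; $\mathrm{ran}$ denotes the column space; $\|\cdot\|_{\mathrm{F}}$ the Frobenius norm. *)

From HB Require Import structures.
From mathcomp Require Import all_boot all_order all_algebra.
From mathcomp Require Export complex.
Set Implicit Arguments. Unset Strict Implicit. Unset Printing Implicit Defensive.
Import Order.TTheory GRing.Theory Num.Theory.
Local Open Scope ring_scope.

(* The scalar field K is a numFieldType equipped with its conjugation
   [conj] (identity for the reals, complex conjugation for C) and its
   nonnegative square root [sqrtK] (used only for the Frobenius norm). *)

Definition adjmx (K : numFieldType) (conj : K -> K) (m n : nat)
  (A : 'M[K]_(m, n)) : 'M[K]_(n, m) := map_mx conj A^T.

Definition unitary_mx (K : numFieldType) (conj : K -> K) (n : nat)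
  (U : 'M[K]_n) : Prop :=
  adjmx conj U *m U = 1%:M /\ U *m adjmx conj U = 1%:M.

Definition orthonormal_cols (K : numFieldType) (conj : K -> K) (m r : nat)
  (U : 'M[K]_(m, r)) : Prop := adjmx conj U *m U = 1%:M.

(* Column space inclusion  ran A \subseteq ran B  (column spaces of A, B
   are the row spaces of their transposes). *)
Definition ran_sub (K : numFieldType) (m n p : nat)
  (A : 'M[K]_(m, n)) (B : 'M[K]_(m, p)) : Prop := (A^T <= B^T)%MS.

Definition ran_eq (K : numFieldType) (m n p : nat)
  (A : 'M[K]_(m, n)) (B : 'M[K]_(m, p)) : Prop := (A^T == B^T)%MS.

Definition frob (K : numFieldType) (sqrtK : K -> K) (m n : nat)
  (A : 'M[K]_(m, n)) : K :=
  sqrtK (\sum_(i < m) \sum_(j < n) `|A i j| ^+ 2).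

Definition lemma4p2_over (K : numFieldType) (conj : K -> K) (sqrtK : K -> K)
  : Prop :=
  forall (I1 I2 : nat) (M N : 'M[K]_(I1, I2)),
    (\rank N <= \rank M)%N ->
    (exists U : 'M[K]_I1,
        unitary_mx conj U /\
        ran_sub (U *m N) M /\
        frob sqrtK (M - U *m N) <= frob sqrtK (M - N))
    /\
    (forall UM : 'M[K]_(I1, \rank M),
        orthonormal_cols conj UM -> ran_eq UM M ->
        exists UN : 'M[K]_(I1, \rank M),
          orthonormal_cols conj UN /\
          ran_sub N UN /\
          frob sqrtK (adjmx conj UM *m M - adjmx conj UN *m N)
            <= frob sqrtK (M - N)).

(* Since |M - U N|^2 = |M|^2 + |N|^2 - 2 Re <M, U N>, it suffices to find a
   unitary U moving N into ran M without decreasing Re <M, U N>.  We argue by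
   induction on the number of rows.  If M has full row rank, U = 1.
   Otherwise a unitary W sends a unit vector orthogonal to ran M to the first
   basis vector, so that W M = [0; M2] and W N = [x; A] with
   rank [x; A] <= rank M, which is less than the number of rows.  Hence there
   is a unit vector u with u^H A = rho x and rho >= 0 (u orthogonal to ran A,
   or u proportional to the coefficients of x in the rows of A).  A plane
   rotation between the first basis vector and u then clears x and turns A
   into A + k u x.  Both signs of k are available, so Re <M2, A> does not
   decrease, and induction applies to M2.  For the second statement take
   U_N = U^H U_M, and use that U_M^H does not increase the Frobenius norm.
   The scalar field only needs a conjugation with |x|^2 = x conj x and a
   square root of nonnegative elements, which covers R and R[i] at once. *)

From HB Require Import structures.
From mathcomp Require Import all_boot all_order all_algebra.
From mathcomp Require Import complex ring.
Set Implicit Arguments. Unset Strict Implicit. Unset Printing Implicit Defensive.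
Import Order.TTheory GRing.Theory Num.Theory.
Local Open Scope ring_scope.

Section ConjugateField.
Variables (K : numFieldType) (conj : {rmorphism K -> K}).
Hypothesis normCK : forall x : K, `|x| ^+ 2 = x * conj x.

Lemma conj_eq0 x : (conj x == 0) = (x == 0).
Proof.
apply/eqP/eqP => [x0|->]; last exact: rmorph0.
have /eqP : `|x| ^+ 2 = 0 by rewrite normCK x0 mulr0.
by rewrite expf_eq0 normr_eq0 => /eqP.
Qed.

Lemma conj_real x : x \is Num.real -> conj x = x.
Proof.
move=> xR; have [->|x0] := eqVneq x 0; first exact: rmorph0.
by apply: (mulfI x0); rewrite -normCK real_normK.
Qed.

Lemma conjK : involutive conj.
Proof.
move=> x; have [->|x0] := eqVneq x 0; first by rewrite !rmorph0.
have cx0 : conj x != 0 by rewrite conj_eq0.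
apply: (mulfI cx0); rewrite -rmorphM (mulrC _ x) -normCK.
by rewrite conj_real // realX ?normr_real.
Qed.

Lemma add_conj_real x : x + conj x \is Num.real.
Proof.
have -> : x + conj x = `|x + 1| ^+ 2 - `|x| ^+ 2 - 1.
  by rewrite !normCK rmorphD rmorph1; ring.
by rewrite !realB ?realX ?normr_real.
Qed.

Local Notation "A ^H" := (adjmx conj A) (at level 8, format "A ^H").

Lemma adjmxK m n (A : 'M[K]_(m, n)) : A^H^H = A.
Proof. by apply/matrixP => i j; rewrite !mxE conjK. Qed.

Lemma adjmxM m n p (A : 'M[K]_(m, n)) (B : 'M[K]_(n, p)) : (A *m B)^H = B^H *m A^H.
Proof. by rewrite /adjmx trmx_mul map_mxM. Qed.

Lemma adjmxD m n (A B : 'M[K]_(m, n)) : (A + B)^H = A^H + B^H.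
Proof. by apply/matrixP => i j; rewrite !mxE rmorphD. Qed.

Lemma adjmxN m n (A : 'M[K]_(m, n)) : (- A)^H = - A^H.
Proof. by apply/matrixP => i j; rewrite !mxE rmorphN. Qed.

Lemma adjmxB m n (A B : 'M[K]_(m, n)) : (A - B)^H = A^H - B^H.
Proof. by rewrite adjmxD adjmxN. Qed.

Lemma adjmxZ m n a (A : 'M[K]_(m, n)) : (a *: A)^H = conj a *: A^H.
Proof. by apply/matrixP => i j; rewrite !mxE rmorphM. Qed.

Lemma adjmx0 m n : (0 : 'M[K]_(m, n))^H = 0.
Proof. by apply/matrixP => i j; rewrite !mxE rmorph0. Qed.

Lemma adjmx_scalar n a : (a%:M : 'M[K]_n)^H = (conj a)%:M.
Proof. by apply/matrixP => i j; rewrite !mxE rmorphMn eq_sym. Qed.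

Lemma adjmx1 n : (1%:M : 'M[K]_n)^H = 1%:M.
Proof. by rewrite adjmx_scalar rmorph1. Qed.

Lemma adjmx_block m1 m2 n1 n2 (A : 'M[K]_(m1, n1)) (B : 'M[K]_(m1, n2))
    (C : 'M[K]_(m2, n1)) (D : 'M[K]_(m2, n2)) :
  (block_mx A B C D)^H = block_mx A^H C^H B^H D^H.
Proof. by rewrite /adjmx tr_block_mx map_block_mx. Qed.

Lemma adjmx_lsub m n1 n2 (A : 'M[K]_(m, n1 + n2)) : (lsubmx A)^H = usubmx A^H.
Proof. by rewrite /adjmx trmx_lsub map_usubmx. Qed.

Definition fdot m n (X Y : 'M[K]_(m, n)) := \sum_i \sum_j conj (X i j) * Y i j.

Local Notation "''[' X , Y ]" := (fdot X Y) (format "''[' X ,  Y ]").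

Definition redot m n (X Y : 'M[K]_(m, n)) := '[X, Y] + conj '[X, Y].

Lemma fdotE m n (X Y : 'M[K]_(m, n)) : '[X, Y] = \tr (X^H *m Y).
Proof.
rewrite /fdot /mxtrace exchange_big; apply: eq_bigr => j _.
by rewrite !mxE; apply: eq_bigr => i _; rewrite !mxE.
Qed.

Lemma fdot_adjmxl m n p (A : 'M[K]_(m, n)) (X : 'M[K]_(m, p)) (Y : 'M[K]_(n, p)) :
  '[A^H *m X, Y] = '[X, A *m Y].
Proof. by rewrite !fdotE adjmxM adjmxK mulmxA. Qed.

Lemma fdot_adjmxr m n p (A : 'M[K]_(n, m)) (X : 'M[K]_(m, p)) (Y : 'M[K]_(n, p)) :
  '[X, A^H *m Y] = '[A *m X, Y].
Proof. by rewrite -fdot_adjmxl adjmxK. Qed.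

Lemma conj_fdot m n (X Y : 'M[K]_(m, n)) : conj '[X, Y] = '[Y, X].
Proof.
rewrite /fdot rmorph_sum; apply: eq_bigr => i _; rewrite rmorph_sum.
by apply: eq_bigr => j _; rewrite rmorphM conjK mulrC.
Qed.

Lemma fdotDr m n (X Y Z : 'M[K]_(m, n)) : '[X, Y + Z] = '[X, Y] + '[X, Z].
Proof. by rewrite !fdotE mulmxDr mxtraceD. Qed.

Lemma fdotDl m n (X Y Z : 'M[K]_(m, n)) : '[Y + Z, X] = '[Y, X] + '[Z, X].
Proof. by rewrite !fdotE adjmxD mulmxDl mxtraceD. Qed.

Lemma fdotNr m n (X Y : 'M[K]_(m, n)) : '[X, - Y] = - '[X, Y].
Proof. by rewrite !fdotE mulmxN raddfN. Qed.

Lemma fdotNl m n (X Y : 'M[K]_(m, n)) : '[- Y, X] = - '[Y, X].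
Proof. by rewrite !fdotE adjmxN mulNmx raddfN. Qed.

Lemma fdotZr m n a (X Y : 'M[K]_(m, n)) : '[X, a *: Y] = a * '[X, Y].
Proof. by rewrite !fdotE -scalemxAr mxtraceZ. Qed.

Lemma fdotZl m n a (X Y : 'M[K]_(m, n)) : '[a *: X, Y] = conj a * '[X, Y].
Proof. by rewrite !fdotE adjmxZ -scalemxAl mxtraceZ. Qed.

Lemma fdot0l m n (Y : 'M[K]_(m, n)) : '[0, Y] = 0.
Proof. by rewrite fdotE adjmx0 mul0mx mxtrace0. Qed.

Lemma fdot_col m1 m2 n (X : 'M[K]_(m1, n)) (Y : 'M[K]_(m2, n)) X' Y' :
  '[col_mx X Y, col_mx X' Y'] = '[X, X'] + '[Y, Y'].
Proof.
rewrite /fdot big_split_ord /=; congr (_ + _); apply: eq_bigr => i _;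
by apply: eq_bigr => j _; rewrite ?col_mxEu ?col_mxEd.
Qed.

Lemma adjmx_mul_cV n (e f : 'cV[K]_n) : e^H *m f = '[e, f]%:M.
Proof.
apply/matrixP => i j; rewrite (ord1 i) (ord1 j) !mxE /fdot /= mulr1n.
by apply: eq_bigr => k _; rewrite big_ord1 !mxE.
Qed.

Lemma fdot_sum_norm m n (X : 'M[K]_(m, n)) :
  '[X, X] = \sum_i \sum_j `|X i j| ^+ 2.
Proof. by apply: eq_bigr => i _; apply: eq_bigr => j _; rewrite normCK mulrC. Qed.

Lemma fdot_ge0 m n (X : 'M[K]_(m, n)) : 0 <= '[X, X].
Proof. by rewrite fdot_sum_norm; do 2![apply: sumr_ge0 => ? _]; rewrite exprn_ge0. Qed.

Lemma fdot_eq0 m n (X : 'M[K]_(m, n)) : ('[X, X] == 0) = (X == 0).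
Proof.
apply/eqP/eqP => [|->]; last exact: fdot0l.
have sq_ge0 (x : K) : 0 <= `|x| ^+ 2 by rewrite exprn_ge0.
rewrite fdot_sum_norm => X0; apply/matrixP => i j.
have Xi0 := psumr_eq0P (fun i _ => sumr_ge0 _ (fun j _ => sq_ge0 (X i j))) X0.
have Xij0 := psumr_eq0P (fun j _ => sq_ge0 (X i j)) (Xi0 i isT).
have /eqP := Xij0 j isT.
by rewrite expf_eq0 normr_eq0 mxE => /eqP.
Qed.

Lemma redot_real m n (X Y : 'M[K]_(m, n)) : redot X Y \is Num.real.
Proof. exact: add_conj_real. Qed.

Lemma redotDZr m n k (X Y Z : 'M[K]_(m, n)) : conj k = k ->
  redot X (Y + k *: Z) = redot X Y + k * redot X Z.
Proof. by move=> kR; rewrite /redot fdotDr fdotZr rmorphD rmorphM kR; ring. Qed.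

Lemma redot_col m1 m2 n (X : 'M[K]_(m1, n)) (Y : 'M[K]_(m2, n)) X' Y' :
  redot (col_mx X Y) (col_mx X' Y') = redot X X' + redot Y Y'.
Proof. by rewrite /redot fdot_col rmorphD addrACA. Qed.

Lemma redot0l m n (Y : 'M[K]_(m, n)) : redot 0 Y = 0.
Proof. by rewrite /redot fdot0l rmorph0 addr0. Qed.

Lemma fdot_subr m n (X Y : 'M[K]_(m, n)) :
  '[X - Y, X - Y] = '[X, X] + '[Y, Y] - redot X Y.
Proof.
by rewrite /redot !(fdotDl, fdotDr, fdotNl, fdotNr) conj_fdot; ring.
Qed.

Lemma unitary1 n : unitary_mx conj (1%:M : 'M[K]_n).
Proof. by rewrite /unitary_mx adjmx1 mul1mx. Qed.

Lemma unitaryM n (U V : 'M[K]_n) :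
  unitary_mx conj U -> unitary_mx conj V -> unitary_mx conj (U *m V).
Proof.
move=> [U1 U2] [V1 V2]; rewrite /unitary_mx adjmxM; split.
  by rewrite mulmxA -(mulmxA _ _ U) U1 mulmx1 V1.
by rewrite mulmxA -(mulmxA _ V) V2 mulmx1 U2.
Qed.

Lemma unitary_adjmx n (U : 'M[K]_n) : unitary_mx conj U -> unitary_mx conj U^H.
Proof. by move=> [U1 U2]; rewrite /unitary_mx adjmxK. Qed.

Lemma unitary_block_diag n1 n2 (U1 : 'M[K]_n1) (U2 : 'M[K]_n2) :
  unitary_mx conj U1 -> unitary_mx conj U2 ->
  unitary_mx conj (block_mx U1 0 0 U2).
Proof.
move=> [U11 U12] [U21 U22]; rewrite /unitary_mx adjmx_block !adjmx0.
rewrite !mulmx_block !mulmx0 !mul0mx !addr0 !add0r U11 U12 U21 U22.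
by rewrite -!scalar_mx_block.
Qed.

Lemma fdot_unitary m n (U : 'M[K]_m) (X Y : 'M[K]_(m, n)) :
  unitary_mx conj U -> '[U *m X, U *m Y] = '[X, Y].
Proof. by move=> [U1 _]; rewrite -fdot_adjmxl mulmxA U1 mul1mx. Qed.

Lemma redot_unitary m n (U : 'M[K]_m) (X Y : 'M[K]_(m, n)) :
  unitary_mx conj U -> redot (U *m X) (U *m Y) = redot X Y.
Proof. by move=> Uu; rewrite /redot fdot_unitary. Qed.

Lemma redot_adjmxr m n p (A : 'M[K]_(n, m)) (X : 'M[K]_(m, p)) (Y : 'M[K]_(n, p)) :
  redot X (A^H *m Y) = redot (A *m X) Y.
Proof. by rewrite /redot fdot_adjmxr. Qed.

Lemma mxrank_unitary n m (U : 'M[K]_n) (X : 'M[K]_(n, m)) :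
  unitary_mx conj U -> \rank (U *m X) = \rank X.
Proof.
move=> [U1 _]; apply/eqP; rewrite eqn_leq mxrankM_maxr /=.
by rewrite -{1}[X]mul1mx -U1 -mulmxA mxrankM_maxr.
Qed.

(* The plane rotation with cosine [a] and sine [b] between the first basis
   vector and the unit vector [u], extended by the identity orthogonally. *)
Definition rotation n (u : 'cV[K]_n) (a b : K) : 'M[K]_(1 + n) :=
  block_mx a%:M (- b *: u^H) (b *: u) (1%:M - (1 - a) *: (u *m u^H)).

Lemma rotation_mulN n (u : 'cV[K]_n) a b : '[u, u] = 1 -> a * a + b * b = 1 ->
  rotation u a b *m rotation u a (- b) = 1%:M.
Proof.
move=> uu ab1; rewrite /rotation; set P := 1%:M - _.
have uHu : u^H *m u = 1%:M by rewrite adjmx_mul_cV uu.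
have uHP : u^H *m P = a *: u^H.
  rewrite mulmxBr mulmx1 -scalemxAr mulmxA uHu mul1mx.
  by apply/matrixP => i j; rewrite !mxE; ring.
have Pu : P *m u = a *: u.
  rewrite mulmxBl mul1mx -scalemxAl -mulmxA uHu mulmx1.
  by apply/matrixP => i j; rewrite !mxE; ring.
have PP : P *m P = 1%:M - (b * b) *: (u *m u^H).
  rewrite mulmxBl mul1mx mulmxBr mulmx1 -scalemxAl -scalemxAr.
  rewrite -mulmxA (mulmxA u^H) uHu mul1mx scalerA.
  have -> : b * b = 1 - a * a by rewrite -ab1; ring.
  by apply/matrixP => i j; rewrite !mxE; ring.
rewrite mulmx_block (scalar_mx_block 1 n 1); congr block_mx.
- rewrite mul_scalar_mx scale_scalar_mx -scalemxAl -scalemxAr uHu scalerA.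
  by rewrite scalemx1 mulrNN -ab1; apply/matrixP => i j; rewrite !mxE mulrnDl.
- rewrite mul_scalar_mx -scalemxAl uHP !scalerA.
  by apply/matrixP => i j; rewrite !mxE; ring.
- rewrite mul_mx_scalar -scalemxAr Pu scalerA.
  by apply/matrixP => i j; rewrite !mxE; ring.
- rewrite PP -scalemxAl -scalemxAr scalerA.
  by apply/matrixP => i j; rewrite !mxE; ring.
Qed.

Lemma adjmx_rotation n (u : 'cV[K]_n) a b : conj a = a -> conj b = b ->
  (rotation u a b)^H = rotation u a (- b).
Proof.
move=> aR bR; rewrite /rotation adjmx_block adjmx_scalar aR !adjmxZ adjmxK.
rewrite adjmxB adjmx1 adjmxZ adjmxM adjmxK rmorphB aR rmorphN bR opprK.
by rewrite (rmorph1 conj).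
Qed.

Lemma rotation_unitary n (u : 'cV[K]_n) a b : '[u, u] = 1 ->
  conj a = a -> conj b = b -> a * a + b * b = 1 -> unitary_mx conj (rotation u a b).
Proof.
move=> uu aR bR ab1; rewrite /unitary_mx adjmx_rotation //.
split; last exact: rotation_mulN.
by rewrite -{2}[b]opprK rotation_mulN // mulrNN.
Qed.

Lemma rotation_mul n m (u : 'cV[K]_n) a b (x : 'rV[K]_m) (A : 'M[K]_(n, m)) :
  rotation u a b *m col_mx x A =
  col_mx (a *: x - b *: (u^H *m A))
         (A + b *: (u *m x) - (1 - a) *: (u *m (u^H *m A))).
Proof.
rewrite /rotation mul_block_col mul_scalar_mx -!scalemxAl mulmxBl mul1mx.
rewrite -scalemxAl -mulmxA.
by congr col_mx; apply/matrixP => i j; rewrite !mxE; ring.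
Qed.

Variable sqrt : K -> K.
Hypotheses (sqrt_ge0 : forall x, 0 <= x -> 0 <= sqrt x)
           (sqrtK : forall x, 0 <= x -> sqrt x ^+ 2 = x).

Lemma ler_sqrt x y : 0 <= x -> x <= y -> sqrt x <= sqrt y.
Proof.
move=> x0 xy; have y0 := le_trans x0 xy.
by rewrite -ler_sqr ?nnegrE ?sqrt_ge0 // !sqrtK.
Qed.

Lemma frobE m n (X : 'M[K]_(m, n)) : frob sqrt X = sqrt '[X, X].
Proof. by rewrite /frob fdot_sum_norm. Qed.

Lemma frob_ge0 m n (X : 'M[K]_(m, n)) : 0 <= frob sqrt X.
Proof. by rewrite frobE sqrt_ge0 ?fdot_ge0. Qed.

Lemma frob_sqr m n (X : 'M[K]_(m, n)) : frob sqrt X ^+ 2 = '[X, X].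
Proof. by rewrite frobE sqrtK ?fdot_ge0. Qed.

Lemma frob_eq0 m n (X : 'M[K]_(m, n)) : (frob sqrt X == 0) = (X == 0).
Proof. by rewrite -fdot_eq0 -frob_sqr expf_eq0. Qed.

Lemma conj_frob m n (X : 'M[K]_(m, n)) : conj (frob sqrt X) = frob sqrt X.
Proof. exact/conj_real/ger0_real/frob_ge0. Qed.

Lemma fdot_normalize m n (X : 'M[K]_(m, n)) : X != 0 ->
  '[(frob sqrt X)^-1 *: X, (frob sqrt X)^-1 *: X] = 1.
Proof.
rewrite -fdot_eq0 => X0.
by rewrite fdotZl fdotZr fmorphV conj_frob mulrA -expr2 exprVn frob_sqr mulVf.
Qed.

Lemma exists_unit_orthogonal n m (A : 'M[K]_(n.+1, m)) : (\rank A < n.+1)%N ->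
  exists e : 'cV[K]_n.+1, [/\ '[e, e] = 1, e^H *m A = 0 & e 0 0 \is Num.real].
Proof.
move=> rkA; set x := nz_row (kermx A).
have x0 : x != 0 by rewrite nz_row_eq0 -mxrank_eq0 mxrank_ker subn_eq0 -ltnNge.
have xA : x *m A = 0 by apply/sub_kermxP/nz_row_sub.
have [c [c0 cR]] : exists c, c != 0 /\ c * x 0 0 \is Num.real.
  have [x00|x00] := eqVneq (x 0 0) 0; first by exists 1; rewrite x00 oner_neq0 mulr0.
  by exists (conj (x 0 0)); rewrite conj_eq0 x00 mulrC -normCK realX ?normr_real.
set y := (c *: x)^H.
have y0 : y != 0.
  by rewrite -(inj_eq (can_inj (@adjmxK _ _))) adjmxK adjmx0 scaler_eq0 negb_or c0.
exists ((frob sqrt y)^-1 *: y); split; first exact: fdot_normalize.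
  by rewrite adjmxZ adjmxK -!scalemxAl xA !scaler0.
rewrite !mxE; apply: realM; first by rewrite realV ger0_real ?frob_ge0.
by rewrite conj_real.
Qed.

Lemma unitary_first_column n (e : 'cV[K]_(1 + n)) :
  '[e, e] = 1 -> e 0 0 \is Num.real ->
  exists2 V : 'M[K]_(1 + n), unitary_mx conj V & lsubmx V = e.
Proof.
move=> ee aR; set a := e 0 0; set z := dsubmx e.
have aa : conj a = a by rewrite conj_real.
have eE : e = col_mx a%:M z.
  rewrite -[e]vsubmxK; congr col_mx; apply/matrixP => i j.
  by rewrite (ord1 i) (ord1 j) !mxE mulr1n; congr (e _ _); apply: val_inj.
have az1 : a * a + '[z, z] = 1.
  by rewrite -ee eE fdot_col /fdot !big_ord1 !mxE aa mulr1n.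
have [z0|z0] := eqVneq z 0.
  exists a%:M; last by rewrite (scalar_mx_block 1 n a) block_mxEh row_mxKl eE z0.
  rewrite /unitary_mx adjmx_scalar aa mul_scalar_mx scale_scalar_mx.
  by rewrite -[a * a]addr0 -(fdot0l z) -z0 az1.
set r := frob sqrt z.
have r0 : r != 0 by rewrite frob_eq0.
exists (rotation (r^-1 *: z) a r).
  apply: rotation_unitary; rewrite ?fdot_normalize ?conj_frob //.
  by rewrite -[r * r]expr2 frob_sqr.
by rewrite /rotation block_mxEh row_mxKl scalerA mulfV // scale1r eE.
Qed.

Lemma rotation_clears_first_row n m (u : 'cV[K]_n) (x : 'rV[K]_m)
    (A : 'M[K]_(n, m)) rho sigma :
  '[u, u] = 1 -> u^H *m A = rho *: x -> rho \is Num.real ->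
  sigma \is Num.real -> sigma ^+ 2 = 1 + rho ^+ 2 ->
  exists2 G : 'M[K]_(1 + n), unitary_mx conj G &
    G *m col_mx x A = col_mx 0 (A + (sigma - rho) *: (u *m x)).
Proof.
move=> uu uA rR sR s2.
have s2_gt0 : 0 < sigma ^+ 2 by rewrite s2 ltr_pwDl ?real_exprn_even_ge0.
have s0 : sigma != 0 by apply: contraTneq s2_gt0 => ->; rewrite expr0n ltxx.
exists (rotation u (rho / sigma) sigma^-1).
  apply: rotation_unitary => //; rewrite ?rmorphM ?fmorphV ?conj_real //.
  have -> : rho / sigma * (rho / sigma) + sigma^-1 * sigma^-1 =
            (1 + rho ^+ 2) / sigma ^+ 2 by field.
  by rewrite -s2 mulfV ?expf_neq0.
rewrite rotation_mul uA -scalemxAr; congr col_mx; apply/matrixP => i j; rewrite !mxE.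
  by field.
have k : sigma^-1 - (1 - rho / sigma) * rho = sigma - rho.
  by rewrite -[in RHS](mulfK s0 sigma) -expr2 s2; field.
by rewrite -k; field.
Qed.

Lemma exists_clearing_direction n m (x : 'rV[K]_m) (A : 'M[K]_(n, m)) :
  x != 0 -> (\rank (col_mx x A) <= n)%N ->
  exists (u : 'cV[K]_n) (rho : K), [/\ '[u, u] = 1, 0 <= rho & u^H *m A = rho *: x].
Proof.
move=> x0 rk; have [rkA|rkA] := ltnP (\rank A) n.
  case: n A rk rkA => [|n] A _ rkA; first by rewrite ltn0 in rkA.
  have [e [ee eA _]] := exists_unit_orthogonal rkA.
  by exists e, 0; rewrite eA scale0r lexx.
have AxA : (A <= col_mx x A)%MS by rewrite -addsmxE addsmxSr.
have xAA : (col_mx x A <= A)%MS.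
  have [_ <-] := mxrank_leqif_sup AxA.
  by rewrite eqn_leq mxrankS // (leq_trans rk).
have xA : (x <= A)%MS by move: xAA; rewrite col_mx_sub => /andP[].
set c := x *m pinvmx A.
have cA : c *m A = x by apply: mulmxKpV.
have y0 : c^H != 0.
  by apply: contra x0 => /eqP c0; rewrite -cA -[c]adjmxK c0 adjmx0 mul0mx.
exists ((frob sqrt c^H)^-1 *: c^H), (frob sqrt c^H)^-1; split.
- exact: fdot_normalize.
- by rewrite invr_ge0 frob_ge0.
- by rewrite adjmxZ adjmxK fmorphV conj_frob -scalemxAl cA.
Qed.

Lemma clear_first_row n m (M A : 'M[K]_(n, m)) (x : 'rV[K]_m) :
  (\rank (col_mx x A) <= n)%N ->
  exists (G : 'M[K]_(1 + n)) (A' : 'M[K]_(n, m)),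
    [/\ unitary_mx conj G, G *m col_mx x A = col_mx 0 A' & redot M A <= redot M A'].
Proof.
move=> rk; have [->|x0] := eqVneq x 0.
  by exists 1%:M, A; split; rewrite ?mul1mx //; apply: unitary1.
have [u [rho [uu rho_ge0 uA]]] := exists_clearing_direction x0 rk.
have clear_with sigma : sigma \is Num.real -> sigma ^+ 2 = 1 + rho ^+ 2 ->
    0 <= (sigma - rho) * redot M (u *m x) ->
    exists (G : 'M[K]_(1 + n)) (A' : 'M[K]_(n, m)),
      [/\ unitary_mx conj G, G *m col_mx x A = col_mx 0 A' & redot M A <= redot M A'].
  move=> sR s2 improves.
  have [G Gu GxA] := rotation_clears_first_row uu uA (ger0_real rho_ge0) sR s2.
  exists G, (A + (sigma - rho) *: (u *m x)); split => //.
  by rewrite redotDZr ?lerDl // conj_real // realB // ger0_real.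
set s := sqrt (1 + rho ^+ 2).
have s_ge0 : 0 <= s by rewrite sqrt_ge0 // addr_ge0 ?ler01 ?exprn_ge0.
have s2 : s ^+ 2 = 1 + rho ^+ 2 by rewrite sqrtK // addr_ge0 ?ler01 ?exprn_ge0.
(* The two square roots of 1 + rho^2 shift A along u x in opposite directions. *)
have [d_ge0|d_lt0] := real_ge0P (redot_real M (u *m x)).
  apply: (clear_with s); rewrite ?ger0_real // mulr_ge0 // subr_ge0.
  by rewrite -ler_sqr ?nnegrE // s2 lerDr ler01.
apply: (clear_with (- s)); rewrite ?realN ?ger0_real ?sqrrN //.
by rewrite mulr_le0 ?(ltW d_lt0) // -opprD oppr_le0 addr_ge0.
Qed.

Definition alignable n m (M N : 'M[K]_(n, m)) := exists U : 'M[K]_n,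
  [/\ unitary_mx conj U, ran_sub (U *m N) M & redot M N <= redot M (U *m N)].

Lemma alignable_full n m (M N : 'M[K]_(n, m)) : \rank M = n -> alignable M N.
Proof.
move=> rkM; exists 1%:M; split; rewrite ?mul1mx //; first exact: unitary1.
by apply: submx_full; rewrite /row_full mxrank_tr rkM.
Qed.

Lemma alignable_trans n m (G : 'M[K]_n) (M N : 'M[K]_(n, m)) :
  unitary_mx conj G -> redot M N <= redot M (G *m N) ->
  alignable M (G *m N) -> alignable M N.
Proof.
move=> Gu le_GN [U [Uu UGN le_UGN]]; exists (U *m G).
by rewrite -mulmxA (le_trans le_GN le_UGN); split => //; apply: unitaryM.
Qed.

Lemma alignable_unitary n m (W : 'M[K]_n) (M N : 'M[K]_(n, m)) :
  unitary_mx conj W -> alignable (W *m M) (W *m N) -> alignable M N.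
Proof.
move=> Wu [U [Uu sub le]]; have [W1 _] := Wu.
exists (W^H *m U *m W); split.
- by apply: unitaryM => //; apply: unitaryM => //; apply: unitary_adjmx.
- rewrite /ran_sub -[M]mul1mx -W1 -!mulmxA !(trmx_mul W^H).
  exact: submxMr sub.
- by rewrite -!mulmxA redot_adjmxr -(redot_unitary _ _ Wu).
Qed.

Lemma alignable_col0 n1 n2 m (M A : 'M[K]_(n2, m)) :
  alignable M A -> alignable (col_mx (0 : 'M_(n1, m)) M) (col_mx 0 A).
Proof.
move=> [U [Uu sub le]]; exists (block_mx 1%:M 0 0 U).
rewrite mul_block_col !mul0mx mulmx0 !addr0 add0r !redot_col redot0l !add0r.
split => //; first by apply: unitary_block_diag => //; apply: unitary1.
have row0E p (Z : 'M[K]_(m, p)) : row_mx (0 : 'M_(m, n1)) Z = Z *m row_mx 0 1%:M.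
  by rewrite mul_mx_row mulmx0 mulmx1.
by rewrite /ran_sub !tr_col_mx !trmx0 !row0E submxMr.
Qed.

Lemma alignable_rank n m (M N : 'M[K]_(n, m)) :
  (\rank N <= \rank M)%N -> alignable M N.
Proof.
elim: n m M N => [|n IH] m M N rk.
  by apply: alignable_full; apply/eqP; rewrite -leqn0 rank_leq_row.
have [fullM|rkM] := leqP n.+1 (\rank M).
  by apply: alignable_full; apply/eqP; rewrite eqn_leq rank_leq_row.
have [e [ee eM eR]] := exists_unit_orthogonal rkM.
have [V Vu Ve] := unitary_first_column (n := n) ee eR.
have Wu := unitary_adjmx Vu; set W := V^H in Wu *.
set M2 := dsubmx (W *m M); set x := usubmx (W *m N); set A := dsubmx (W *m N).
have WME : W *m M = col_mx 0 M2.
  by rewrite -[LHS]vsubmxK -mul_usub_mx -adjmx_lsub Ve eM.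
have WNE : W *m N = col_mx x A by rewrite vsubmxK.
have rkM2 : \rank M2 = \rank M by rewrite -(rank_col_0mx 1) -WME mxrank_unitary.
have rkxA : (\rank (col_mx x A) <= n)%N.
  by rewrite -WNE mxrank_unitary // -ltnS (leq_ltn_trans rk rkM).
have [G [A' [Gu GxA le]]] := clear_first_row M2 rkxA.
have rkA' : (\rank A' <= \rank M2)%N.
  by rewrite -(rank_col_0mx 1) -GxA mxrank_unitary // -WNE mxrank_unitary // rkM2.
apply: (alignable_unitary Wu); rewrite WME WNE.
apply: (alignable_trans Gu); first by rewrite GxA !redot_col !redot0l !add0r.
by rewrite GxA; apply/alignable_col0/IH.
Qed.

Lemma ler_frob_orthonormal m r p (P : 'M[K]_(m, r)) (X : 'M[K]_(m, p)) :
  orthonormal_cols conj P -> frob sqrt (P^H *m X) <= frob sqrt X.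
Proof.
move=> PP; rewrite !frobE; apply: ler_sqrt; first exact: fdot_ge0.
set Q := 1%:M - P *m P^H.
have QH : Q^H = Q by rewrite adjmxB adjmx1 adjmxM adjmxK.
have QQ : Q *m Q = Q.
  rewrite mulmxBl mul1mx mulmxBr mulmx1 mulmxA -(mulmxA P) PP mulmx1.
  by rewrite subrr subr0.
have QXQX : '[Q *m X, Q *m X] = '[X, Q *m X].
  by rewrite -{1}QH fdot_adjmxl mulmxA QQ.
have PXPX : '[P^H *m X, P^H *m X] = '[X, P *m P^H *m X].
  by rewrite fdot_adjmxl mulmxA.
have -> : '[X, X] = '[P^H *m X, P^H *m X] + '[Q *m X, Q *m X].
  by rewrite QXQX PXPX /Q mulmxBl mul1mx fdotDr fdotNr addrC subrK.
by rewrite lerDl fdot_ge0.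
Qed.

Lemma lemma4p2_over_conj_sqrt : lemma4p2_over conj sqrt.
Proof.
move=> I1 I2 M N rk; have [U [Uu UN le]] := alignable_rank rk.
have [U1 U2] := Uu.
have frob_UN : frob sqrt (M - U *m N) <= frob sqrt (M - N).
  rewrite !frobE; apply: ler_sqrt; first exact: fdot_ge0.
  by rewrite !fdot_subr fdot_unitary // lerD2l lerN2.
split; first by exists U.
move=> UM UMo /andP[_ MUM]; exists (U^H *m UM); split; [|split].
- by rewrite /orthonormal_cols adjmxM adjmxK mulmxA -(mulmxA _ U) U2 mulmx1.
- rewrite /ran_sub -[N]mul1mx -U1 -mulmxA !(trmx_mul U^H).
  exact: submxMr (submx_trans UN MUM).
- rewrite adjmxM adjmxK -mulmxA -mulmxBr.
  exact: le_trans (ler_frob_orthonormal _ UMo) frob_UN.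
Qed.

End ConjugateField.

Theorem lemma4p2 (R : rcfType) :
  lemma4p2_over (K := R) idfun Num.sqrt /\
  lemma4p2_over (K := R[i]) Num.conj sqrtC.
Proof.
split; apply: lemma4p2_over_conj_sqrt.
- by move=> x; rewrite real_normK ?num_real.
- by move=> x; rewrite sqrtr_ge0.
- exact: sqr_sqrtr.
- exact: normCK.
- by move=> x; rewrite sqrtC_ge0.
- by move=> x _; rewrite sqrtCK.
Qed.
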